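(* Consider a batch contextual bandit with finite context space $\mathcal{S}$, finite action space $\mathcal{A}$, context distribution $d_0$ and reward distributions $R(s,a)\in\Delta([0,R_{\max}])$. Let $\pi_b$ be a behavior policy, $\mu:=d_0\times\pi_b$, $\mathcal{F}$ a finite class of functions $\mathcal{S}\times\mathcal{A}\to[0,R_{\max}]$, and $\hat f\in\mathcal{F}$ with $\mathcal{L}_\mu(\hat f)-\min_{f\in\mathcal{F}}\mathcal{L}_\mu(f)\le\epsilon$. Let $Q^\star(s,a)=\mathbb{E}_{r\sim R(s,a)}[r]$ and $\epsilon_{\mathrm{approx}}:=\inf_{f\in\mathcal{F}}\|f-Q^\star\|_\mu^2$. Assume only that there is a constant $C<+\infty$ with $\pi_b(a\mid s)\ge1/C$ for all $s,a$. Then $$v^{\pi_{\hat f}}\ \ge\ v^\star-2\sqrt{C(\epsilon+\epsilon_{\mathrm{approx}})}.$$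
   Context: Data are generated by $s\sim d_0$, $a\sim\pi_b(\cdot\mid s)$, $r\sim R(s,a)$; $\mu$ is the joint distribution of $(s,a)$. $\mathcal{L}_\mu(f):=\mathbb{E}_{(s,a)\sim\mu,\,r\sim R(s,a)}[(f(s,a)-r)^2]$. For a distribution $\nu$ on $\mathcal{S}\times\mathcal{A}$, $\|g\|_\nu^2:=\mathbb{E}_{(s,a)\sim\nu}[g(s,a)^2]$. $\pi_f$ is the greedy policy $s\mapsto\arg\max_a f(s,a)$ (fixed tie-breaking). $v^\pi:=\mathbb{E}_{s\sim d_0,\,r\sim R(s,\pi(s))}[r]$ and $v^\star:=\mathbb{E}_{s\sim d_0}[\max_aQ^\star(s,a)]$. *)

From HB Require Import structures.
From mathcomp Require Import all_boot all_order all_algebra.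
From mathcomp Require Import all_classical all_reals all_analysis.
Set Implicit Arguments. Unset Strict Implicit. Unset Printing Implicit Defensive.
Import Order.TTheory GRing.Theory Num.Theory.
Local Open Scope ring_scope.
Local Open Scope classical_set_scope.

Section Bandit.
Variables (R : realType) (S A : finType).
Variables (d0 : S -> R) (pib : S -> A -> R) (Rw : S -> A -> probability R R).

Definition Qstar (s : S) (a : A) : R := Rintegral (Rw s a) setT (fun r => r).

Definition loss (f : S -> A -> R) : R :=
  \sum_(s : S) \sum_(a : A) d0 s * pib s a *
     Rintegral (Rw s a) setT (fun r => (f s a - r) ^+ 2).

Definition sqnorm_mu (g : S -> A -> R) : R :=
  \sum_(s : S) \sum_(a : A) d0 s * pib s a * (g s a) ^+ 2.

Definition value (pi : S -> A) : R :=
  \sum_(s : S) d0 s * Rintegral (Rw (s) (pi s)) setT (fun r => r).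

(* v* = E_{s~d0} max_a Q*(s,a)  (Q* >= 0, so the 0 seed is harmless) *)
Definition vstar : R :=
  \sum_(s : S) d0 s * \big[Num.max/0]_(a : A) Qstar s a.

Definition greedy (f : S -> A -> R) (pi : S -> A) : Prop :=
  forall s a, f s a <= f s (pi s).
End Bandit.

(* Expanding the square shows that the expected squared loss of f exceeds that of f'
   by exactly ||f - Q*||_mu^2 - ||f' - Q*||_mu^2, so the eps-approximate minimiser
   f-hat of the loss satisfies ||f-hat - Q*||_mu^2 <= eps + eps_approx.  In each
   context s the greedy action of f-hat loses at most 2 max_a |f-hat - Q*| <=
   2 sqrt (sum_a |f-hat - Q*|^2 (s, a)) against the best action.  Averaging over d0,
   Jensen's inequality and pi_b >= 1/C bound the average of these square roots by
   sqrt (C ||f-hat - Q*||_mu^2). *)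

From HB Require Import structures.
From mathcomp Require Import all_boot all_order all_algebra.
From mathcomp Require Import all_classical all_reals all_analysis.
From mathcomp Require Import measurable_realfun ring lra.
Import Order.TTheory GRing.Theory Num.Theory.
Local Open Scope ring_scope.
Local Open Scope classical_set_scope.

Lemma Rintegral_setT_full {d} {T : measurableType d} {R : realType}
    (P : probability T R) (D : set T) (h : T -> R) :
  measurable D -> P D = 1%E -> measurable_fun setT h ->
  Rintegral P setT h = Rintegral P D h.
Proof.
move=> mD PD mh; have mDC : measurable (~` D) by exact: measurableC.
rewrite /Rintegral -(setUv D) integral_setU //; last 2 first.
- by rewrite setUv; exact/measurable_EFinP.
- exact/disj_setPCl.
rewrite (@null_set_integral _ _ _ P (~` D)) ?adde0 //.
- by apply/measurable_EFinP; exact: measurable_funS mh.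
- by have := probability_setC P mD; rewrite PD subee.
Qed.

Section RewardOnInterval.
Context {R : realType} {P : probability R R} {M : R}.
Hypothesis P_itv : P `[0, M] = 1%E.

Let mitv : measurable (`[0, M] : set R). Proof. exact: measurable_itv. Qed.

Let integrable_itv (h : R -> R) (B : R) :
  measurable_fun setT h -> (forall x, 0 <= x <= M -> `|h x| <= B) ->
  P.-integrable `[0, M] (EFin \o h).
Proof.
move=> mh hB; apply: measurable_bounded_integrable => //.
- by apply: le_lt_trans (probability_le1 _ _) _ => //; rewrite ltey.
- exact: measurable_funS mh.
- exists B; split; first exact: num_real.
  move=> y By x; rewrite /= in_itv /= => /hB hx; exact: le_trans hx (ltW By).
Qed.

Lemma Rintegral_id_ge0 : 0 <= Rintegral P setT (fun r => r).
Proof.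
rewrite (Rintegral_setT_full P _ _ mitv) //.
by apply: Rintegral_ge0 => x; rewrite /= in_itv /= => /andP[].
Qed.

Lemma Rintegral_sqr_subl (c : R) :
  Rintegral P setT (fun r => (c - r) ^+ 2) =
  c ^+ 2 - 2 * c * Rintegral P setT (fun r => r) + Rintegral P setT (fun r => r ^+ 2).
Proof.
have mX : measurable_fun setT (fun r : R => r ^+ 2) by exact: measurable_funX.
rewrite !(Rintegral_setT_full P _ _ mitv) //; last first.
  by apply: measurable_funX; apply: measurable_funB.
have iX : P.-integrable `[0, M] (EFin \o (fun r : R => r ^+ 2)).
  apply: (@integrable_itv _ (M ^+ 2)) => // x /andP[x0 xM].
  by rewrite normrX ger0_norm // ler_pXn2r ?nnegrE // (le_trans x0).
have iaff : P.-integrable `[0, M] (EFin \o (fun r : R => c ^+ 2 - 2 * c * r)).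
  apply: (@integrable_itv _ (`|c ^+ 2| + `|2 * c| * M)).
    by apply: measurable_funB => //; exact: measurable_funM.
  move=> x /andP[x0 xM]; apply: le_trans (ler_normB _ _) _.
  by rewrite lerD2l normrM ler_wpM2l // ger0_norm.
rewrite (@eq_Rintegral _ _ _ _ _ (fun r => (c ^+ 2 - 2 * c * r) + r ^+ 2)); last first.
  by move=> x _ /=; ring.
rewrite RintegralD // RintegralB //; last 2 first.
- by apply: (@integrable_itv _ (`|c ^+ 2|)).
- apply: (@integrable_itv _ (`|2 * c| * M)); first exact: measurable_funM.
  by move=> x /andP[x0 xM]; rewrite normrM ler_wpM2l // ger0_norm.
rewrite Rintegral_cst // RintegralZl //.
have -> : fine (P `[0, M]) = 1 by rewrite P_itv.
rewrite mulr1 //.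
by apply: (@integrable_itv id M) => // x /andP[x0 xM]; rewrite ger0_norm.
Qed.

End RewardOnInterval.

Lemma le_add_bigmin (R : realDomainType) (I : finType) (x : I -> R) (i0 : I) (e : R) :
  (forall i, x i0 - x i <= e) -> x i0 <= e + \big[Num.min/x i0]_i x i.
Proof.
move=> he; rewrite -lerBlDl; apply: le_bigmin => [|i _].
  by rewrite lerBlDl lerDr; have := he i0; rewrite subrr.
by rewrite lerBlDl -lerBlDr.
Qed.

Lemma sqr_sum_le_sum_sqr (R : realDomainType) (S : finType) (w x : S -> R) :
  (forall s, 0 <= w s) -> \sum_s w s = 1 ->
  (\sum_s w s * x s) ^+ 2 <= \sum_s w s * x s ^+ 2.
Proof.
move=> w_ge0 w_sum1; set m := \sum_s w s * x s.
have : 0 <= \sum_s w s * (x s - m) ^+ 2.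
  by apply: sumr_ge0 => s _; rewrite mulr_ge0 ?sqr_ge0.
have -> : \sum_s w s * (x s - m) ^+ 2 =
          \sum_s (w s * x s ^+ 2 - 2 * m * (w s * x s) + m ^+ 2 * w s).
  by apply: eq_bigr => s _; ring.
rewrite big_split sumrB /= -!mulr_sumr w_sum1 -/m; lra.
Qed.

Lemma normr_le_sqrt_sum_sqr (R : rcfType) (A : finType) (g : A -> R) (a : A) :
  `|g a| <= Num.sqrt (\sum_b g b ^+ 2).
Proof.
have g2_ge0 b : 0 <= g b ^+ 2 by exact: sqr_ge0.
rewrite -sqrtr_sqr ler_sqrt ?sumr_ge0 //.
by rewrite (bigD1 a) //= lerDl sumr_ge0.
Qed.

Lemma bigmax_le_argmax_approx (R : realDomainType) (A : finType) (q f : A -> R)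
    (b : A) (e : R) :
  (forall a, 0 <= q a) -> (forall a, f a <= f b) -> (forall a, `|f a - q a| <= e) ->
  \big[Num.max/0]_a q a <= q b + 2 * e.
Proof.
move=> q_ge0 b_max f_approx; have e_ge0 : 0 <= e := le_trans (normr_ge0 _) (f_approx b).
apply: bigmax_le => [|a _]; first by rewrite addr_ge0 ?mulr_ge0.
have := b_max a; have := f_approx a; have := f_approx b.
rewrite !ler_norml => /andP[? ?] /andP[? ?]; lra.
Qed.

Section Bandit.
Context {R : realType} {S A : finType} {d0 : S -> R} {pib : S -> A -> R}.
Context {Rw : S -> A -> probability R R} {Rmax : R}.
Hypothesis Rw_itv : forall s a, Rw s a `[0, Rmax] = 1%E.

Lemma Qstar_ge0 s a : 0 <= Qstar Rw s a.
Proof. exact: Rintegral_id_ge0 (Rw_itv s a). Qed.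

Lemma loss_subE (f f' : S -> A -> R) :
  loss d0 pib Rw f - loss d0 pib Rw f' =
  sqnorm_mu d0 pib (fun s a => f s a - Qstar Rw s a) -
  sqnorm_mu d0 pib (fun s a => f' s a - Qstar Rw s a).
Proof.
rewrite /loss /sqnorm_mu -!sumrB; apply: eq_bigr => s _.
rewrite -!sumrB; apply: eq_bigr => a _.
rewrite /Qstar !(Rintegral_sqr_subl (Rw_itv s a)); ring.
Qed.

Context {C : R}.
Hypotheses (d0_ge0 : forall s, 0 <= d0 s) (d0_sum1 : \sum_s d0 s = 1).
Hypotheses (C_gt0 : 0 < C) (pib_ge : forall s a, C^-1 <= pib s a).

Lemma sum_sqr_le_concentrability (g : S -> A -> R) :
  \sum_s d0 s * \sum_a g s a ^+ 2 <= C * sqnorm_mu d0 pib g.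
Proof.
rewrite /sqnorm_mu mulr_sumr; apply: ler_sum => s _.
rewrite !mulr_sumr; apply: ler_sum => a _.
have Cpib_ge1 : 1 <= C * pib s a.
  by rewrite -(mulfV (lt0r_neq0 C_gt0)) ler_wpM2l // ltW.
rewrite [leRHS](_ : _ = d0 s * g s a ^+ 2 * (C * pib s a)); last by ring.
by rewrite ler_peMr // mulr_ge0 ?sqr_ge0.
Qed.

Lemma value_ge_vstar_sub_sqnorm (f : S -> A -> R) (pi : S -> A) :
  greedy f pi ->
  vstar d0 Rw - 2 * Num.sqrt (C * sqnorm_mu d0 pib (fun s a => f s a - Qstar Rw s a))
    <= value d0 Rw pi.
Proof.
move=> f_greedy.
pose G s := Num.sqrt (\sum_a (f s a - Qstar Rw s a) ^+ 2).
have regret : vstar d0 Rw - value d0 Rw pi <= 2 * \sum_s d0 s * G s.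
  rewrite /vstar /value -sumrB mulr_sumr; apply: ler_sum => s _.
  rewrite -mulrBr mulrCA ler_wpM2l // lerBlDl.
  apply: (@bigmax_le_argmax_approx _ _ (Qstar Rw s) (f s)) => // a.
    exact: Qstar_ge0.
  exact: normr_le_sqrt_sum_sqr.
have G_avg : \sum_s d0 s * G s <=
             Num.sqrt (C * sqnorm_mu d0 pib (fun s a => f s a - Qstar Rw s a)).
  apply: le_trans (ler_wsqrtr (sum_sqr_le_concentrability _)).
  have G_sum_ge0 : 0 <= \sum_s d0 s * G s.
    by apply: sumr_ge0 => s _; rewrite mulr_ge0 ?sqrtr_ge0.
  rewrite -(ger0_norm G_sum_ge0) -sqrtr_sqr ler_sqrt; last first.
    by apply: sumr_ge0 => s _; rewrite mulr_ge0 ?sumr_ge0 // => a _; rewrite sqr_ge0.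
  have -> : \sum_s d0 s * \sum_a (f s a - Qstar Rw s a) ^+ 2 = \sum_s d0 s * G s ^+ 2.
    apply: eq_bigr => s _; rewrite /G sqr_sqrtr //.
    by apply: sumr_ge0 => a _; rewrite sqr_ge0.
  exact: sqr_sum_le_sum_sqr.
lra.
Qed.

End Bandit.

Theorem theorem2 (R : realType) (S A : finType)
  (d0 : S -> R) (pib : S -> A -> R) (Rw : S -> A -> probability R R)
  (Rmax : R) (I : finType) (F : I -> S -> A -> R) (ihat : I)
  (eps C : R) (pihat : S -> A) :
  (forall s, 0 <= d0 s) -> \sum_(s : S) d0 s = 1 ->
  (forall s a, 0 <= pib s a) -> (forall s, \sum_(a : A) pib s a = 1) ->
  (forall s a, Rw s a `[0, Rmax] = 1%E) ->
  (forall i s a, 0 <= F i s a <= Rmax) ->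
  (forall i, loss d0 pib Rw (F ihat) - loss d0 pib Rw (F i) <= eps) ->
  0 < C -> (forall s a, pib s a >= C^-1) ->
  greedy (F ihat) pihat ->
  value d0 Rw pihat >=
    vstar d0 Rw - 2 * Num.sqrt (C * (eps +
      \big[Num.min/sqnorm_mu d0 pib (fun s a => F ihat s a - Qstar Rw s a)]_(i : I)
         sqnorm_mu d0 pib (fun s a => F i s a - Qstar Rw s a))).
Proof.
move=> d0_ge0 d0_sum1 _ _ Rw_itv _ excess_loss C_gt0 pib_ge greedy_hat.
apply: le_trans _ (value_ge_vstar_sub_sqnorm Rw_itv d0_ge0 d0_sum1 C_gt0 pib_ge
                   _ _ greedy_hat).
apply: lerB => //; rewrite ler_pM2l //; apply/ler_wsqrtr/ler_wpM2l; first exact: ltW.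
apply: le_add_bigmin => i; rewrite -(loss_subE Rw_itv); exact: excess_loss.
Qed.
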